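(* For every $x\in\Delta\setminus\partial\Delta$, $p(x)=\nabla H\cdot F(x)=2\sum_{i,j\in\mathbb{V}:\,x_{ij}>0}x_{ij}\big(y_{ij}-N_i(x)\big)^2$, where $N_i(x)=\sum_{k:\,x_{ik}>0}\frac{x_{ik}}{x_i}y_{ik}$ and $p(x)=\sum_{i,j,k:\,x_{ij},x_{ik}>0}\frac{x_{ij}x_{ik}}{x_i}(y_{ij}-y_{ik})^2$.
   Context: Let $G=(\mathbb{V},E)$ be a finite graph with adjacency $\sim$. Let $a_{ij}=a_{ji}\ge0$ ($>0$ only if $i\sim j$) and $p_{ij}=p_{ji}\in[0,1]$ ($=0$ if $i\not\sim j$), with some $a_{ij}p_{ij}>0$. Fix $h_1\in(0,1]$; $\Delta$ is the set of arrays $x=(x_{ij})$ with $x_{ij}=x_{ji}\ge0$, $x_{ij}=0$ if $i\not\sim j$, $\sum_{i,j}x_{ij}=1$, $\sum_{(i,j):a_{ij}p_{ij}>0}x_{ij}\ge h_1$; $x_i=\sum_jx_{ij}$. $\partial\Delta$: the $x\in\Delta$ such that some vertex $i$ having a neighbour $j$ with $a_{ij}p_{ij}>0$ has $\sum_{j:a_{ij}p_{ij}>0}x_{ij}=0$. $H(x)=\sum_{(i,j):x_{ij}>0}a_{ij}p_{ij}x_{ij}^2/(x_ix_j)$; $y_{ij}=a_{ij}p_{ij}x_{ij}/(x_ix_j)$ ($0$ if $a_{ij}p_{ij}=0$); $F(x)_{ij}=x_{ij}(y_{ij}-H(x))$ ($0$ if $x_{ij}=0$). $\nabla H\cdot F=\sum_{i,j}\frac{\partial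 H}{\partial x_{ij}}F_{ij}$, with $H$ regarded as a function of the ordered-pair variables $x_{ij}$ ($x_{ij},x_{ji}$ independent, $x_i=\sum_jx_{ij}$). *)

From HB Require Import structures.
From mathcomp Require Import all_boot all_order all_algebra.
From mathcomp Require Import all_classical all_reals all_analysis.
Set Implicit Arguments. Unset Strict Implicit. Unset Printing Implicit Defensive.
Import Order.TTheory GRing.Theory Num.Theory.
Local Open Scope ring_scope.

Section Defs.
Variables (R : realType) (V : finType).
Implicit Types (x : V -> V -> R) (a p : V -> V -> R).

Definition xv x (i : V) : R := \sum_(j : V) x i j.

Definition Hf a p x : R :=
  \sum_(i : V) \sum_(j : V | 0 < x i j)
     a i j * p i j * x i j ^+ 2 / (xv x i * xv x j).

Definition yf a p x (i j : V) : R :=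
  if a i j * p i j == 0 then 0 else a i j * p i j * x i j / (xv x i * xv x j).

Definition Ff a p x (i j : V) : R :=
  if x i j == 0 then 0 else x i j * (yf a p x i j - Hf a p x).

Definition bump x (i j : V) (t : R) : V -> V -> R :=
  fun k l => if (k == i) && (l == j) then x k l + t else x k l.

(* partial derivative of H with respect to the ordered-pair variable x_ij,
   all x_kl (including x_ji) treated as independent, x_k = sum_l x_kl *)
Definition dH a p x (i j : V) : R :=
  derive1 (fun t : R => Hf a p (bump x i j t)) 0.

Definition gradH_dot_F a p x : R :=
  \sum_(i : V) \sum_(j : V) dH a p x i j * Ff a p x i j.

Definition Nf a p x (i : V) : R :=
  \sum_(k : V | 0 < x i k) x i k / xv x i * yf a p x i k.

Definition pf a p x : R :=
  \sum_(i : V) \sum_(j : V | 0 < x i j) \sum_(k : V | 0 < x i k)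
     x i j * x i k / xv x i * (yf a p x i j - yf a p x i k) ^+ 2.

Definition in_Delta (adj : rel V) a p (h1 : R) x : Prop :=
  [/\ (forall i j, x i j = x j i),
      (forall i j, 0 <= x i j),
      (forall i j, ~~ adj i j -> x i j = 0),
      \sum_(i : V) \sum_(j : V) x i j = 1 &
      h1 <= \sum_(i : V) \sum_(j : V | 0 < a i j * p i j) x i j].

Definition in_bDelta a p x : Prop :=
  exists i : V, (exists j : V, 0 < a i j * p i j) /\
                \sum_(j : V | 0 < a i j * p i j) x i j = 0.

End Defs.

From Pilot Require Import Defs.
From HB Require Import structures.
From mathcomp Require Import all_boot all_order all_algebra.
From mathcomp Require Import all_classical all_reals all_analysis.
From mathcomp Require Import ring.

(* For x_kl > 0, moving the single variable x_kl changes x_kl in the numerator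
   of one term and the row sum x_k in the denominators of all terms of rows and
   columns k; differentiating gives dH/dx_kl = 2 y_kl - 2 N_k (the column-k
   contribution equals the row-k one by the symmetry of x and y).  Hence
   grad H . F = sum_i sum_j (2 y_ij - 2 N_i) x_ij (y_ij - H), and since N_i is
   the mean of y_i. with weights x_i. / x_i, the constant H drops out, leaving
   2 sum x_ij (y_ij - N_i)^2.  The pairwise form p(x) is the usual expression
   of a weighted variance as a mean of squared differences. *)
Import Order.TTheory GRing.Theory Num.Theory numFieldNormedType.Exports.
Local Open Scope ring_scope.

Section DeriveRational.
Variable R : realType.

Lemma is_derive_sum_seq (U W : normedModType R) (I : Type) (r : seq I)
    (P : pred I) (h : I -> U -> W) (dh : I -> W) (u v : U) :
  (forall i, P i -> is_derive u v (h i) (dh i)) ->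
  is_derive u v (fun t => \sum_(i <- r | P i) h i t) (\sum_(i <- r | P i) dh i).
Proof.
move=> hder; rewrite -fct_sumE.
elim/big_ind2: _ => //; first exact: is_derive_cst.
by move=> f g df dg; exact: is_deriveD.
Qed.

Lemma is_derive_affine (u al t0 : R) :
  is_derive t0 1 (fun t : R => u + al * t) al.
Proof.
have := is_deriveD (is_derive_cst u t0 1) (is_deriveZ al (is_derive_id t0 (1 : R))).
by rewrite add0r /GRing.scale /= mulr1.
Qed.

Lemma is_derive0_sq_div_prod (c u v w al be ga : R) : v != 0 -> w != 0 ->
  is_derive (0 : R) 1
    (fun t : R => c * (u + al * t) ^+ 2 / ((v + be * t) * (w + ga * t)))
    (c * (2 * al * u / (v * w) - u ^+ 2 * (be * w + ga * v) / (v * w) ^+ 2)).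
Proof.
move=> v0 w0.
have dnum := is_deriveZ c (is_deriveX 2 (is_derive_affine u al 0)).
have dden := is_deriveM (is_derive_affine v be 0) (is_derive_affine w ga 0).
have den0 : ((fun t : R => v + be * t) * (fun t : R => w + ga * t)) 0 != 0.
  by rewrite !fctE !mulr0 !addr0 mulf_neq0.
eapply is_derive_eq; first exact: (is_deriveM dnum (is_deriveV den0 dden)).
rewrite /GRing.scale /= !fctE /GRing.scale /= !mulr0 !addr0.
by field; rewrite v0 w0.
Qed.

End DeriveRational.

Section WeightedVariance.
Context {F : realFieldType} {I : finType} {P : pred I} {w y : I -> F} {s N : F}.
Hypotheses (sum_w : \sum_(j | P j) w j = s)
           (mean_y : s * N = \sum_(j | P j) w j * y j).

Lemma sum_centered_mul (c : F) :
  \sum_(j | P j) w j * (y j - N) * (y j - c) = \sum_(j | P j) w j * (y j - N) ^+ 2.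
Proof.
have centered : \sum_(j | P j) w j * (y j - N) = 0.
  by under eq_bigr do rewrite mulrBr; rewrite sumrB -mulr_suml sum_w mean_y subrr.
apply/eqP; rewrite -subr_eq0 -sumrB.
rewrite (eq_bigr (fun j => w j * (y j - N) * (N - c))); last by move=> j _; ring.
by rewrite -mulr_suml centered mul0r.
Qed.

Lemma sum_pairwise_sqdiff : (forall j, P j -> 0 <= w j) ->
  \sum_(j | P j) \sum_(k | P k) w j * w k / s * (y j - y k) ^+ 2 =
  2 * \sum_(j | P j) w j * (y j - N) ^+ 2.
Proof.
move=> w_ge0; have [s0|s_neq0] := eqVneq s 0.
  have w0 := psumr_eq0P w_ge0 (etrans sum_w s0).
  rewrite big1 ?[X in _ = _ * X]big1 ?mulr0 // => j Pj; first by rewrite w0 ?mul0r.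
  by rewrite big1 // => k _; rewrite w0 ?mul0r.
set A := \sum_(j | P j) w j * y j ^+ 2.
have N_mean : N = (\sum_(j | P j) w j * y j) / s by rewrite -mean_y mulrC mulKf.
have inner j : \sum_(k | P k) w j * w k / s * (y j - y k) ^+ 2 =
    w j * y j ^+ 2 + (w j * y j) * (- 2 * N) + w j * (A / s).
  rewrite (eq_bigr (fun k =>
    w j / s * (y j ^+ 2 * w k + (- 2 * y j) * (w k * y k) + w k * y k ^+ 2))); last first.
    by move=> k _; ring.
  rewrite -mulr_sumr !big_split /= -!mulr_sumr sum_w -/A N_mean.
  by field.
rewrite (eq_bigr _ (fun j _ => inner j)).
rewrite [in RHS](eq_bigr (fun j =>
  w j * y j ^+ 2 + (w j * y j) * (- 2 * N) + w j * N ^+ 2)); last by move=> j _; ring.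
rewrite !big_split /= -!mulr_suml sum_w -/A N_mean.
by field.
Qed.

End WeightedVariance.

Lemma sum_kronecker (R : pzRingType) (I : finType) (P : pred I) (f : I -> R) (l : I) :
  \sum_(j | P j) (j == l)%:R * f j = if P l then f l else 0.
Proof.
rewrite (eq_bigr (fun j => if j == l then f j else 0)); last first.
  by move=> j _; case: eqP; rewrite ?mul1r ?mul0r.
rewrite -big_mkcondr /=; case: (boolP (P l)) => Pl.
  by rewrite (big_pred1 l) // => j /=; case: eqP => [->|_]; rewrite ?Pl ?andbF.
by rewrite big_pred0 // => j /=; case: eqP => [->|_]; rewrite ?(negbTE Pl) ?andbF.
Qed.

Section PartialDerivatives.
Variables (R : realType) (V : finType) (a p x : V -> V -> R).
Hypotheses (x_sym : forall i j, x i j = x j i) (x_ge0 : forall i j, 0 <= x i j).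

Lemma le_entry_xv i j : x i j <= xv x i.
Proof. by rewrite /xv (bigD1 j) //= lerDl sumr_ge0. Qed.

Lemma xv_gt0 {i j} : 0 < x i j -> 0 < xv x i.
Proof. by move=> xij_gt0; apply: lt_le_trans xij_gt0 (le_entry_xv i j). Qed.

Lemma sum_support_xv i : \sum_(j | 0 < x i j) x i j = xv x i.
Proof.
rewrite /xv [in RHS](bigID (fun j => 0 < x i j)) /= [X in _ = _ + X]big1 ?addr0 //.
by move=> j; rewrite lt_neqAle x_ge0 andbT negbK => /eqP <-.
Qed.

Lemma xv_mulN i : xv x i * Nf a p x i = \sum_(j | 0 < x i j) x i j * yf a p x i j.
Proof.
rewrite /Nf mulr_sumr; apply: eq_bigr => j xij_gt0.
by rewrite mulrA [xv x i * _]mulrC divfK // lt0r_neq0 // (xv_gt0 xij_gt0).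
Qed.

Lemma yfE i j : yf a p x i j = a i j * p i j * x i j / (xv x i * xv x j).
Proof. by rewrite /yf; case: eqP => // ->; rewrite !mul0r. Qed.

Lemma bumpE k l t i j : Defs.bump x k l t i j = x i j + (i == k)%:R * (j == l)%:R * t.
Proof.
rewrite /Defs.bump; case: (eqVneq i k) => [->|]; case: (eqVneq j l) => [->|] //=;
  by rewrite ?mulr0 ?mul0r ?addr0 ?mul1r.
Qed.

Lemma xv_bump k l t i : xv (Defs.bump x k l t) i = xv x i + (i == k)%:R * t.
Proof.
rewrite /xv; under eq_bigr do rewrite bumpE -mulrA.
by rewrite big_split /= -mulr_sumr sum_kronecker.
Qed.

Definition Hf_line k l (t : R) : R :=
  \sum_(i : V) \sum_(j : V | 0 < x i j)
    a i j * p i j * (x i j + (i == k)%:R * (j == l)%:R * t) ^+ 2 /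
    ((xv x i + (i == k)%:R * t) * (xv x j + (j == k)%:R * t)).

Lemma Hf_bump_near {k l} : 0 < x k l ->
  \forall t \near (0 : R), Hf a p (Defs.bump x k l t) = Hf_line k l t.
Proof.
move=> xkl_gt0; near=> t.
have t_small : `|t| < x k l by near: t; exact: (@nbhs0_lt R R _ xkl_gt0).
apply: eq_bigr => i _.
rewrite (eq_bigl (fun j => 0 < x i j)) => [|j]; last first.
  rewrite /Defs.bump; case: ifP => // /andP[/eqP -> /eqP ->].
  by rewrite xkl_gt0 -ltrBlDl sub0r; move: t_small; rewrite ltr_norml => /andP[].
by apply: eq_bigr => j _; rewrite bumpE !xv_bump.
Unshelve. all: by end_near.
Qed.

Lemma is_derive_Hf_line k l :
  is_derive (0 : R) 1 (Hf_line k l) (\sum_(i : V) \sum_(j : V | 0 < x i j)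
    ((i == k)%:R * ((j == l)%:R * (2 * yf a p x i j))
     - (i == k)%:R * (x i j / xv x i * yf a p x i j)
     - (j == k)%:R * (x i j / xv x j * yf a p x i j))).
Proof.
apply: is_derive_sum_seq => i _; apply: is_derive_sum_seq => j xij_gt0.
have xi_neq0 := lt0r_neq0 (xv_gt0 xij_gt0).
have xj_neq0 : xv x j != 0 by apply/lt0r_neq0/(@xv_gt0 j i); rewrite x_sym.
eapply is_derive_eq; first exact: is_derive0_sq_div_prod.
by rewrite yfE; field; rewrite xi_neq0 xj_neq0.
Qed.

Hypotheses (a_sym : forall i j, a i j = a j i) (p_sym : forall i j, p i j = p j i).

Lemma yf_sym i j : yf a p x i j = yf a p x j i.
Proof. by rewrite !yfE a_sym p_sym x_sym [xv x j * _]mulrC. Qed.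

Lemma dH_support k l : 0 < x k l ->
  dH a p x k l = 2 * yf a p x k l - 2 * Nf a p x k.
Proof.
move=> xkl_gt0.
rewrite /dH derive1E (near_eq_derive _ (Hf_bump_near xkl_gt0)).
have Hf_line_der := is_derive_Hf_line k l.
rewrite derive_val; under eq_bigr do rewrite !sumrB; rewrite !sumrB.
have -> : \sum_(i : V) \sum_(j : V | 0 < x i j)
    (i == k)%:R * ((j == l)%:R * (2 * yf a p x i j)) = 2 * yf a p x k l.
  by under eq_bigr do rewrite -mulr_sumr; rewrite !sum_kronecker /= xkl_gt0.
have -> : \sum_(i : V) \sum_(j : V | 0 < x i j)
    (i == k)%:R * (x i j / xv x i * yf a p x i j) = Nf a p x k.
  by under eq_bigr do rewrite -mulr_sumr; rewrite sum_kronecker.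
have -> : \sum_(i : V) \sum_(j : V | 0 < x i j)
    (j == k)%:R * (x i j / xv x j * yf a p x i j) = Nf a p x k.
  under eq_bigr do rewrite sum_kronecker.
  rewrite -big_mkcond /=; apply: eq_big => i; first by rewrite x_sym.
  by rewrite x_sym yf_sym.
by ring.
Qed.

Lemma gradH_dot_F_dev :
  gradH_dot_F a p x =
  2 * \sum_(i : V) \sum_(j : V | 0 < x i j) x i j * (yf a p x i j - Nf a p x i) ^+ 2.
Proof.
rewrite /gradH_dot_F mulr_sumr; apply: eq_bigr => i _.
rewrite (bigID (fun j => 0 < x i j)) /= [X in _ + X]big1 ?addr0 => [|j]; last first.
  by rewrite lt_neqAle x_ge0 andbT negbK /Ff eq_sym => ->; rewrite mulr0.
under eq_bigr => j xij_gt0 do rewrite dH_support // /Ff (negbTE (lt0r_neq0 xij_gt0)).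
rewrite -(sum_centered_mul (sum_support_xv i) (xv_mulN i) (Hf a p x)) [RHS]mulr_sumr.
by apply: eq_bigr => j _; ring.
Qed.

Lemma pf_dev :
  pf a p x =
  2 * \sum_(i : V) \sum_(j : V | 0 < x i j) x i j * (yf a p x i j - Nf a p x i) ^+ 2.
Proof.
rewrite /pf mulr_sumr; apply: eq_bigr => i _.
apply: sum_pairwise_sqdiff; [exact: sum_support_xv | exact: xv_mulN | by move=> j /ltW].
Qed.

End PartialDerivatives.

Theorem lemma2 (R : realType) (V : finType) (adj : rel V)
  (a p : V -> V -> R) (h1 : R)
  (adj_sym : forall i j, adj i j = adj j i)
  (a_sym : forall i j, a i j = a j i)
  (a_ge0 : forall i j, 0 <= a i j)
  (a_adj : forall i j, 0 < a i j -> adj i j)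
  (p_sym : forall i j, p i j = p j i)
  (p_01 : forall i j, 0 <= p i j <= 1)
  (p_adj : forall i j, ~~ adj i j -> p i j = 0)
  (ap_pos : exists i j, 0 < a i j * p i j)
  (h1_01 : 0 < h1 <= 1)
  (x : V -> V -> R)
  (xD : in_Delta adj a p h1 x) (xnb : ~ in_bDelta a p x) :
  pf a p x = gradH_dot_F a p x /\
  gradH_dot_F a p x =
    2 * \sum_(i : V) \sum_(j : V | 0 < x i j) x i j * (yf a p x i j - Nf a p x i) ^+ 2.
Proof.
(* Every sum ranges over the support of x. *)
case: xD => x_sym x_ge0 _ _ _.
by rewrite pf_dev // gradH_dot_F_dev.
Qed.
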